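(* Suppose each interface function $g_k$ is piecewise linear and $\varepsilon$ is piecewise constant (constant on each $\Omega_k$). Then there is a constant $C_8>0$ independent of $h$ such that $$\sum_{j=1}^{S}\operatorname{meas}\big(\operatorname{supp}_{S_j}|\varepsilon-\varepsilon_h|\big)\le C_8 h\qquad\text{for all } h>0.$$
   Context: $H,L_x>0$, $\Omega=(0,L_x)\times(-H,H)$. There are $I\ge1$ interfaces given by $g_k:[0,L_x]\to\mathbb R$ ($k=1,\dots,I$), piecewise of the form $\sum_l\mathbf 1_{[x_{lk},x_{(l+1)k})}\phi_{lk}$ with nonzero jumps at the finitely many break points; the interfaces are separated from each other and from $x_2=\pm H$ by some $\delta>0$, and $\Omega_k$ ($k=1,\dots,I+1$) is the region of $\Omega$ between the graphs of $g_{k-1}$ and $g_k$ ($g_0\equiv -H$, $g_{I+1}\equiv H$). $\varepsilon:\Omega\to\mathbb C$ is the relative permittivity. Slices: $-H=h_0<h_1<\dots<h_S=H$, $S_j=\{(x_1,x_2)\in\Omega:h_{j-1}\le x_2<h_j\}$, $\Delta h_j=h_j-h_{j-1}$, $h=\max_j\Delta h_j$, with $h/\min_j\Delta h_j\le C_\Delta$ for a fixed constant $C_\Delta>0$, and every point where $g_k'=0$ lies on an inter-slice line $x_2=h_j$. The stairstep approximation is $\varepsilon_h(x_1,x_2)=\varepsilon(x_1,h_{j-1/2})$ on $S_j$, $h_{j-1/2}=(h_{j-1}+h_j)/2$ (in slices where the interfaces are already horizontal/vertical stairsteps, $\varepsilon_h=\varepsilon$). $\operatorname{supp}_{S_j}|\varepsilon-\varepsilon_h|$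 is the set of points of $S_j$ where $\varepsilon\ne\varepsilon_h$, and meas is Lebesgue measure. *)

From HB Require Import structures.
From mathcomp Require Import all_boot all_order all_algebra.
From mathcomp Require Import all_classical all_reals all_analysis.
From mathcomp Require Import complex.
Set Implicit Arguments. Unset Strict Implicit. Unset Printing Implicit Defensive.
Import Order.TTheory GRing.Theory Num.Theory.
Local Open Scope classical_set_scope.
Local Open Scope ring_scope.

Definition lebesgue2 {R : realType} : set (R * R) -> \bar R :=
  ((@lebesgue_measure R) \x (@lebesgue_measure R))%E.

Definition Omega {R : realType} (Lx H : R) : set (R * R) :=
  [set p | 0 < p.1 < Lx /\ - H < p.2 < H].

Definition pw_linear_with_jumps {R : realType} (Lx : R) (f : R -> R) : Prop :=
  exists (n : nat) (xb a b : nat -> R),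
    (0 < n)%N /\ xb 0%N = 0 /\ xb n = Lx /\
    (forall l, (l < n)%N -> xb l < xb l.+1) /\
    (forall l, (l < n)%N -> forall x, xb l <= x < xb l.+1 -> f x = a l * x + b l) /\
    (forall l, (0 < l < n)%N -> a l.-1 * xb l + b l.-1 != a l * xb l + b l).

Definition gext {R : realType} (H : R) (I : nat) (g : nat -> R -> R) (k : nat) (x : R) : R :=
  if k == 0%N then - H else if k == I.+1 then H else g k x.

Definition Omega_k {R : realType} (Lx H : R) (I : nat) (g : nat -> R -> R) (k : nat)
  : set (R * R) :=
  [set p | Omega Lx H p /\ gext H I g k.-1 p.1 < p.2 < gext H I g k p.1].

Definition slice {R : realType} (Lx H : R) (hs : nat -> R) (j : nat) : set (R * R) :=
  [set p | Omega Lx H p /\ hs j.-1 <= p.2 < hs j].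

Definition hmid {R : realType} (hs : nat -> R) (j : nat) : R := (hs j.-1 + hs j) / 2.

Definition eps_h {R : realType} {V : Type} (hs : nat -> R) (eps : R * R -> V) (j : nat)
  (p : R * R) : V := eps (p.1, hmid hs j).

Definition supp_slice {R : realType} {V : Type} (Lx H : R) (hs : nat -> R)
  (eps : R * R -> V) (j : nat) : set (R * R) :=
  [set p | slice Lx H hs j p /\ eps p <> eps_h hs eps j p].

Definition dh {R : realType} (hs : nat -> R) (j : nat) : R := hs j - hs j.-1.
Definition hmax {R : realType} (S : nat) (hs : nat -> R) : R :=
  \big[Num.max/0]_(1 <= j < S.+1) dh hs j.

Definition admissible_slicing {R : realType} (Lx H : R) (I : nat) (g : nat -> R -> R)
  (CD : R) (S : nat) (hs : nat -> R) : Prop :=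
  (0 < S)%N /\ hs 0%N = - H /\ hs S = H /\
  (forall j, (j < S)%N -> hs j < hs j.+1) /\
  (forall j, (1 <= j <= S)%N -> hmax S hs <= CD * dh hs j) /\
  (forall k, (1 <= k <= I)%N -> forall x, 0 < x < Lx ->
     derivable (g k) x 1 -> derive1 (g k) x = 0 ->
     exists j, (j <= S)%N /\ g k x = hs j).

(* If no interface g_k crosses the closed strip hs_i <= x2 <= hs_(i+1) above the
   abscissa x, then every point (x, x2) of the slice S_(i+1) lies in the same layer
   Omega_k as (x, h_(i+1/2)), so eps = eps_h there.  Hence supp_(S_(i+1)) is contained
   in (U_k X_(k,i)) x [hs_i, hs_(i+1)), where X_(k,i) is the set of abscissae at which
   g_k crosses the strip, and its measure is at most Delta h_(i+1) sum_k |X_(k,i)|.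
   For a fixed interface the closed strips overlap only along the lines x2 = hs_i, so
   sum_i |X_(k,i)| <= 2 Lx, which gives the bound with C8 = 2 Lx I. *)

From HB Require Import structures.
From mathcomp Require Import all_boot all_order all_algebra.
From mathcomp Require Import all_classical all_reals all_analysis.
From mathcomp Require Import complex.
Set Implicit Arguments. Unset Strict Implicit. Unset Printing Implicit Defensive.
Import Order.TTheory GRing.Theory Num.Theory.
Local Open Scope classical_set_scope.
Local Open Scope ring_scope.

Lemma trivIset_preimage {I T U : Type} (D : set I) (F : I -> set U) (f : T -> U) :
  trivIset D F -> trivIset D (fun i => f @^-1` F i).
Proof. by move=> tF i j Di Dj [x [Fix Fjx]]; apply: tF => //; exists (f x). Qed.

Lemma ord_trivIset {T : Type} n (F : 'I_n -> set T) :
  (forall i j : 'I_n, (i < j)%N -> F i `&` F j = set0) -> trivIset setT F.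
Proof.
move=> F_disj i j _ _ [x [Fix Fjx]]; apply/val_inj/eqP/negPn/negP.
rewrite neq_ltn => /orP[]/F_disj/seteqP[/(_ x) + _]; apply; by split.
Qed.

Section increasing_sequence.
Context {R : realDomainType} (hs : nat -> R) (S : nat).
Hypothesis hs_incr : forall i, (i < S)%N -> hs i < hs i.+1.

Lemma incr_seq_lt i j : (i < j)%N -> (j <= S)%N -> hs i < hs j.
Proof.
move=> ij jS; have iS : (i <= S)%N by rewrite (leq_trans (ltnW ij)).
apply: (homo_ltn_in (D := [pred k | (k <= S)%N]) (r := <%R)) ij => //.
- by move=> y x z; apply: lt_trans.
- by move=> a b aS bS k /andP[_ kb]; rewrite inE (leq_trans (ltnW kb)).
- by move=> k _ kS; apply: hs_incr.
Qed.

Lemma incr_seq_le i j : (i <= j)%N -> (j <= S)%N -> hs i <= hs j.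
Proof.
by rewrite leq_eqVlt => /predU1P[-> //|ij] jS; rewrite ltW ?incr_seq_lt.
Qed.

Lemma trivIset_itvco_slabs : trivIset setT (fun i : 'I_S => `[hs i, hs i.+1[%classic).
Proof.
apply: ord_trivIset => i j lt_ij.
have hij : hs i.+1 <= hs j by apply: (incr_seq_le lt_ij); exact: ltnW.
rewrite -subset0 => x [/=]; rewrite !in_itv /= => /andP[_ xi] /andP[jx _].
by have := lt_le_trans xi (le_trans hij jx); rewrite ltxx.
Qed.

Lemma trivIset_slab_tops : trivIset setT (fun i : 'I_S => [set hs i.+1]).
Proof.
apply: ord_trivIset => i j lt_ij; rewrite -subset0 => x [/= -> eq_ij].
have : hs i.+1 < hs j.+1 by apply: incr_seq_lt => //; rewrite ltnS.
by rewrite eq_ij ltxx.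
Qed.

End increasing_sequence.

Section sum_measure.
Context d (T : measurableType d) (R : realType) (mu : {measure set T -> \bar R}).

Lemma sum_measure_trivIset_le n (D : set T) (F : 'I_n -> set T) :
  measurable D -> (forall i, measurable (F i)) -> trivIset setT F ->
  (forall i, F i `<=` D) -> (\sum_(i < n) mu (F i) <= mu D)%E.
Proof.
move=> mD mF tF FD; rewrite -measure_bigsetU_ord //.
apply: le_measure; rewrite ?inE //; first exact: bigsetU_measurable.
by elim/big_ind: _ => // A B AD BD; rewrite subUset.
Qed.

Lemma sum_measure_preimage_le n (D : set T) (f : T -> R) (B : 'I_n -> set R) :
  measurable D -> measurable_fun D f -> (forall i, measurable (B i)) ->
  trivIset setT B -> (\sum_(i < n) mu (D `&` f @^-1` B i) <= mu D)%E.
Proof.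
move=> mD mf mB tB; apply: sum_measure_trivIset_le => //.
- by move=> i; exact: mf.
- exact/trivIset_setIl/trivIset_preimage.
Qed.

Lemma sum_measure_preimage_slabs_le S (hs : nat -> R) (D : set T) (f : T -> R) :
  (forall i, (i < S)%N -> hs i < hs i.+1) -> measurable D -> measurable_fun D f ->
  (\sum_(i < S) mu (D `&` f @^-1` `[hs i, hs i.+1]) <= mu D *+ 2)%E.
Proof.
move=> hs_incr mD mf.
have slab_split (i : 'I_S) : mu (D `&` f @^-1` `[hs i, hs i.+1]) =
    (mu (D `&` f @^-1` `[hs i, hs i.+1[) + mu (D `&` f @^-1` [set hs i.+1]))%E.
  rewrite -measureU; first last.
  - rewrite -subset0 => x [[_ /=]]; rewrite in_itv /= => /andP[_ + [_ /= fx]].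
    by rewrite fx ltxx.
  - exact: mf.
  - exact: mf.
  by rewrite -setIUr -preimage_setU setUitv1 // bnd_simp; exact/ltW/hs_incr.
rewrite (eq_bigr _ (fun i _ => slab_split i)) big_split /=.
by apply: leeD; apply: sum_measure_preimage_le => //;
  [exact: trivIset_itvco_slabs | exact: trivIset_slab_tops].
Qed.

End sum_measure.

(* For arbitrary, possibly non-measurable, sets: the sections are compared through
   the outer measure underlying Lebesgue measure. *)
Lemma le_lebesgue2 {R : realType} (A B : set (R * R)) :
  A `<=` B -> (lebesgue2 A <= lebesgue2 B)%E.
Proof.
move=> AB; rewrite /lebesgue2 /product_measure1 !ge0_integralE //.
apply: ereal_sup_le => _ [h hf <-]; exists h => //= x.
apply: le_trans (hf x) _; rewrite /patch /=; case: ifP => // _ /=.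
by apply: le_mu_ext => y; rewrite /xsection /= !inE; exact: AB.
Qed.

Section piecewise_linear.
Context {R : realType}.

Lemma itv_partition_cover (xb : nat -> R) n x :
  xb 0%N <= x < xb n -> exists2 l, (l < n)%N & xb l <= x < xb l.+1.
Proof.
elim: n => [/andP[x0 xn]|n IH /andP[x0 xn]].
  by have := le_lt_trans x0 xn; rewrite ltxx.
have [xxn|xnx] := ltP x (xb n); last by exists n; rewrite ?xnx.
by case: IH => [|l ln hl]; [rewrite x0 | exists l => //; exact: ltnW].
Qed.

Lemma pw_linear_measurable (Lx : R) (f : R -> R) :
  pw_linear_with_jumps Lx f -> measurable_fun `]0, Lx[ f.
Proof.
move=> [n [xb [a [b [_ [xb0 [xbn [_ [f_aff _]]]]]]]]].
pose piece l : set R := if (l < n)%N then `[xb l, xb l.+1[%classic else set0.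
have mpiece l : measurable (piece l) by rewrite /piece; case: ifP.
apply: (measurable_funS (E := \bigcup_l piece l)).
- exact: bigcup_measurable.
- move=> x /=; rewrite in_itv /= => /andP[x0 xL].
  case: (@itv_partition_cover xb n x) => [|l ln hl].
    by rewrite xb0 xbn (ltW x0).
  by exists l => //; rewrite /piece ln /= in_itv.
- apply/measurable_fun_bigcup => // l; rewrite /piece; case: ifP => ln.
    apply: (eq_measurable_fun (fun x => a l * x + b l)) => [x|].
      by rewrite inE /= in_itv /= => /(f_aff l ln) ->.
    by apply: measurable_realfun.measurable_funD => //;
      apply: measurable_realfun.measurable_funM.
  exact: measurable_fun_set0.
Qed.

End piecewise_linear.

Lemma exists_common_layer {R : realDomainType} (e : nat -> R) n (y y' : R) :
  e 0%N < y -> y < e n ->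
  (forall k, (k <= n)%N -> (e k < y) && (e k < y') || (y < e k) && (y' < e k)) ->
  exists2 k, (0 < k <= n)%N & (e k.-1 < y < e k) && (e k.-1 < y' < e k).
Proof.
move=> e0y yen no_sep.
have : exists k, (k <= n)%N && (y < e k) by exists n; rewrite leqnn.
case/ex_minnP => k /andP[kn y_ek] kmin.
have k_gt0 : (0 < k)%N by case: k y_ek {kn kmin} => // /(lt_trans e0y); rewrite ltxx.
have ek1_y : ~~ (y < e k.-1).
  apply: contraTN k_gt0 => y_ek1; rewrite -ltn_predL -leqNgt kmin //.
  by rewrite y_ek1 (leq_trans (leq_pred k)).
exists k; first by rewrite k_gt0.
have /orP[/andP[/lt_trans/(_ y_ek)]|/andP[_ y'_ek]] := no_sep k kn.
  by rewrite ltxx.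
have /orP[/andP[lo lo']|/andP[hi _]] := no_sep k.-1 (leq_trans (leq_pred k) kn).
  by rewrite lo lo' y_ek y'_ek.
by rewrite hi in ek1_y.
Qed.

Definition strip_crossing {R : realType} (Lx : R) (f : R -> R) (a b : R) : set R :=
  `]0, Lx[ `&` f @^-1` `[a, b].

Lemma sum_strip_crossing_le {R : realType} (Lx : R) (f : R -> R) S (hs : nat -> R) :
  0 < Lx -> (forall i, (i < S)%N -> hs i < hs i.+1) -> measurable_fun `]0, Lx[ f ->
  (\sum_(i < S) lebesgue_measure (strip_crossing Lx f (hs i) (hs i.+1)) <=
   (Lx *+ 2)%:E)%E.
Proof.
move=> Lx_gt0 hs_incr mf.
have Lx_len : lebesgue_measure `]0, Lx[%classic = Lx%:E.
  by rewrite lebesgue_measure_itv /= lte_fin Lx_gt0 oppr0 adde0.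
by rewrite EFin_natmul -Lx_len; exact: sum_measure_preimage_slabs_le.
Qed.

Section stairstep.
Context {R : realType} {V : Type} (Lx H : R) (I : nat) (g : nat -> R -> R).
Context (eps : R * R -> V) (c : nat -> V).
Hypothesis eps_layers : forall k, (1 <= k <= I.+1)%N ->
  forall p, Omega_k Lx H I g k p -> eps p = c k.
Variables (hs : nat -> R) (i : nat).
Hypotheses (hs_lo : - H <= hs i) (hs_incr : hs i < hs i.+1) (hs_hi : hs i.+1 <= H).

Lemma eps_h_eq_off_interfaces p : slice Lx H hs i.+1 p ->
  (forall k, (1 <= k <= I)%N -> ~ (hs i <= g k p.1 <= hs i.+1)) ->
  eps p = eps_h hs eps i.+1 p.
Proof.
move=> [p_Omega /= /andP[lo_y y_hi]] no_cross; have [p1_in /andP[Hy yH]] := p_Omega.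
set m := hmid hs i.+1; have [lo_m m_hi] := midf_lt hs_incr.
have Hm : - H < m by exact: le_lt_trans hs_lo lo_m.
have mH : m < H by exact: lt_le_trans m_hi hs_hi.
pose e k := gext H I g k p.1.
have no_sep k : (k <= I.+1)%N -> (e k < p.2) && (e k < m) || (p.2 < e k) && (m < e k).
  move=> kI; rewrite /e /gext; case: eqP => [_|/eqP k_gt0]; first by rewrite Hy Hm.
  case: eqP => [_|/eqP k_neq]; first by rewrite yH mH orbT.
  have /no_cross : (1 <= k <= I)%N by rewrite lt0n k_gt0 -ltnS ltn_neqAle k_neq.
  case: (ltP (g k p.1) (hs i)) => [gk_lo _|lo_gk /negP].
    by rewrite (lt_le_trans gk_lo lo_y) (lt_trans gk_lo lo_m).
  rewrite /= -ltNge => hi_gk.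
  by rewrite (lt_trans y_hi hi_gk) (lt_trans m_hi hi_gk) orbT.
have y_top : p.2 < e I.+1 by rewrite /e /gext eqxx.
have [k k_in /andP[y_in m_in]] := exists_common_layer Hy y_top no_sep.
by rewrite /eps_h !(eps_layers k_in) //; split => //; split => //=; rewrite -/m Hm mH.
Qed.

Lemma supp_slice_sub_crossings :
  supp_slice Lx H hs eps i.+1 `<=`
  \big[setU/set0]_(k < I) (strip_crossing Lx (g k.+1) (hs i) (hs i.+1)) `*`
  `[hs i, hs i.+1[.
Proof.
move=> p [p_slice neq_eps]; split; last by case: p_slice => _ /=; rewrite in_itv.
rewrite -(bigcup_mkord I (fun k => strip_crossing Lx (g k.+1) (hs i) (hs i.+1))).
apply: contrapT => no_cross; apply: neq_eps.
apply: eps_h_eq_off_interfaces => // k /andP[k_gt0 kI] cross; apply: no_cross.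
exists k.-1; first by rewrite /= prednK.
case: p_slice => [[p1_in _] _]; rewrite prednK //; split => /=; by rewrite in_itv.
Qed.

Lemma lebesgue2_supp_slice_le :
  (forall k, (1 <= k <= I)%N -> measurable_fun `]0, Lx[ (g k)) ->
  (lebesgue2 (supp_slice Lx H hs eps i.+1) <=
   (\sum_(k < I) lebesgue_measure (strip_crossing Lx (g k.+1) (hs i) (hs i.+1))) *
   (dh hs i.+1)%:E)%E.
Proof.
move=> mg.
have mX k : (k < I)%N -> measurable (strip_crossing Lx (g k.+1) (hs i) (hs i.+1)).
  by move=> kI; apply: mg.
apply: le_trans (le_lebesgue2 supp_slice_sub_crossings) _.
have mU : measurable (\big[setU/set0]_(k < I) strip_crossing Lx (g k.+1) (hs i) (hs i.+1)).
  by apply: bigsetU_measurable => k _; apply: mX.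
rewrite /lebesgue2 product_measure1E //.
have slab_len : lebesgue_measure `[hs i, hs i.+1[%classic = (dh hs i.+1)%:E.
  by rewrite lebesgue_measure_itv /= lte_fin hs_incr /dh -EFinB.
rewrite -slab_len; apply: lee_wpmul2r => //.
have := @content_subadditive _ _ _ lebesgue_measure _
  (fun k => strip_crossing Lx (g k.+1) (hs i) (hs i.+1)) I.
by apply=> // k /= kI; exact: mX.
Qed.

End stairstep.

Lemma dh_le_hmax {R : realType} S (hs : nat -> R) j :
  (0 < j <= S)%N -> dh hs j <= hmax S hs.
Proof.
by move=> /andP[j_gt0 jS]; apply: le_bigmax_seq; rewrite // mem_index_iota j_gt0 ltnS.
Qed.

Theorem lemma4 (R : realType) (H Lx : R) (I : nat) (g : nat -> R -> R)
  (delta : R) (eps : R * R -> R[i]) (CD : R) :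
  0 < H -> 0 < Lx -> (1 <= I)%N -> 0 < delta -> 0 < CD ->
  (* interfaces: piecewise linear, separated from each other and from x2 = +-H by delta *)
  (forall k, (1 <= k <= I)%N -> pw_linear_with_jumps Lx (g k)) ->
  (forall k, (k <= I)%N -> forall x, 0 <= x <= Lx ->
     gext H I g k x + delta <= gext H I g k.+1 x) ->
  (* eps piecewise constant: constant on each Omega_k *)
  (exists c : nat -> R[i], forall k, (1 <= k <= I.+1)%N ->
     forall p, Omega_k Lx H I g k p -> eps p = c k) ->
  exists C8 : R, 0 < C8 /\
    forall (S : nat) (hs : nat -> R), admissible_slicing Lx H I g CD S hs ->
      (\sum_(1 <= j < S.+1) lebesgue2 (supp_slice Lx H hs eps j) <= (C8 * hmax S hs)%:E)%E.
Proof.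
move=> _ Lx_gt0 I_gt0 _ _ g_pw _ [c eps_layers].
exists (Lx *+ 2 * I%:R); split; first by rewrite mulr_gt0 ?ltr0n // pmulrn_rgt0.
move=> S hs [_ [hs0 [hsS [hs_incr _]]]].
have mg k : (1 <= k <= I)%N -> measurable_fun `]0, Lx[ (g k).
  by move/g_pw/pw_linear_measurable.
pose crossings (i : nat) := (\sum_(k < I)
  lebesgue_measure (strip_crossing Lx (g k.+1) (hs i) (hs i.+1)))%E.
have slice_le (i : 'I_S) : (lebesgue2 (supp_slice Lx H hs eps i.+1) <=
    crossings i * (hmax S hs)%:E)%E.
  apply: le_trans (lebesgue2_supp_slice_le eps_layers _ _ _ mg) _.
  - by rewrite -hs0 (incr_seq_le hs_incr) // ltnW.
  - exact: hs_incr.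
  - by rewrite -hsS (incr_seq_le hs_incr).
  apply: lee_wpmul2l; first exact: sume_ge0.
  by rewrite lee_fin; apply: dh_le_hmax; rewrite /= ltn_ord.
have all_crossings : (\sum_(i < S) crossings i <= (Lx *+ 2 * I%:R)%:E)%E.
  rewrite /crossings exchange_big /=; apply: le_trans.
    by apply: lee_sum => k _; apply: sum_strip_crossing_le => //; exact: (mg k.+1 (ltn_ord k)).
  by rewrite sumEFin sumr_const card_ord mulr_natr.
rewrite big_add1 /= big_mkord.
apply: le_trans; first by apply: lee_sum => i _; exact: slice_le.
rewrite -ge0_sume_distrl; last by move=> i _; exact: sume_ge0.
by rewrite EFinM; apply: lee_wpmul2r all_crossings; rewrite lee_fin bigmax_ge_id.
Qed.
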